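(* Let $\Gamma$ be a complete dominance graph on vertex set $\{1,\dots,n\}$ and let $L=D-A$ be its graph Laplacian. Let $V$ be the $n\times n$ matrix whose $i$th column is $\mathbf{v}_i=\sum_{k=1}^{i}\mathbf{e}_k$ (with $\mathbf{e}_k$ the standard basis vectors of $\mathbb{R}^n$). Then $V^{-1}$ is the upper bidiagonal matrix with all diagonal entries equal to $1$, all superdiagonal entries equal to $-1$, and all other entries $0$. Moreover, there exists a permutation matrix $P$ such that, for each $i=1,\dots,n$, the $i$th row of $V^{-1}$ is a left eigenvector of $P^TLP$ for the eigenvalue $n-i$.
   Context: For a weighted digraph with weights $w_{ij}\ge 0$, $d^{+}(i)=\sum_j w_{ij}$, $D=\mathrm{diag}(d^{+}(1),\dots,d^{+}(n))$, $A=[w_{ij}]$, $L=D-A$. A complete dominance graph is an acyclic tournament (for each pair of distinct vertices exactly one of $(i,j),(j,i)$ is an edge) in which every edge has weight $1$. A left eigenvector $\mathbf{w}$ of a matrix $M$ for eigenvalue $\lambda$ is a nonzero vector with $\mathbf{w}^{*}M=\lambda\mathbf{w}^{*}$. *)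

From mathcomp Require Import all_boot all_order all_fingroup all_algebra.
Set Implicit Arguments. Unset Strict Implicit. Unset Printing Implicit Defensive.
Import GRing.Theory Num.Theory.
Local Open Scope ring_scope.

(* Vertices {1,...,n} are represented by 'I_n = {0,...,n-1}. A digraph is an
   edge relation E : rel 'I_n; (i,j) is an edge iff E i j. *)

Definition is_tournament (n : nat) (E : rel 'I_n) : Prop :=
  (forall i, ~~ E i i) /\
  (forall i j, i != j -> (E i j && ~~ E j i) || (E j i && ~~ E i j)).

Definition is_acyclic (n : nat) (E : rel 'I_n) : Prop :=
  ~ (exists (x : 'I_n) (p : seq 'I_n), [&& (size p > 0)%N, path E x p & last x p == x]).

Definition complete_dominance (n : nat) (E : rel 'I_n) : Prop :=
  is_tournament E /\ is_acyclic E.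

Definition adj_mx (R : nzRingType) (n : nat) (E : rel 'I_n) : 'M[R]_n :=
  \matrix_(i, j) (E i j)%:R.

Definition outdeg_mx (R : nzRingType) (n : nat) (E : rel 'I_n) : 'M[R]_n :=
  diag_mx (\row_i \sum_j adj_mx R E i j).

Definition laplacian (R : nzRingType) (n : nat) (E : rel 'I_n) : 'M[R]_n :=
  outdeg_mx R E - adj_mx R E.

Definition Vmx (R : nzRingType) (n : nat) : 'M[R]_n :=
  \matrix_(k, i) (k <= i)%N%:R.

Definition bidiag_mx (R : nzRingType) (n : nat) : 'M[R]_n :=
  \matrix_(i, j) ((i == j :> nat)%:R - (i.+1 == j :> nat)%:R).

(* In a complete dominance graph domination is a strict total order, so
   ranking the vertices by their number of dominators relabels the graph as
   the transitive tournament [a -> b iff a < b].  Its Laplacian is upper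
   triangular, with diagonal [n - 1 - a] and [-1] everywhere above the
   diagonal; subtracting consecutive rows, i.e. multiplying by [V^-1] on the
   left, therefore gives [V^-1 L = diag (n - 1 - a) V^-1]. *)

From mathcomp Require Import all_boot all_order all_fingroup all_algebra.
From mathcomp Require Import zify.
Import GRing.Theory Num.Theory.
Local Open Scope ring_scope.

Section NatIndexedSums.
Variable R : pzRingType.

Lemma sum_ord_nat_delta n m (F : nat -> R) :
  \sum_(k < n) (m == k :> nat)%:R * F k = (m < n)%N%:R * F m.
Proof.
elim: n => [|n IHn]; first by rewrite big_ord0 mul0r.
rewrite big_ord_recr /= IHn ltnS [(m <= n)%N]leq_eqVlt.
by case: eqVneq => [->|_] /=; rewrite ?ltnn ?mul0r ?add0r ?addr0.
Qed.

Lemma sum_ord_gtn n m : \sum_(k < n) (m < k)%N%:R = (n - m.+1)%N%:R :> R.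
Proof.
elim: n => [|n IHn]; first by rewrite big_ord0.
rewrite big_ord_recr /= IHn -natrD; congr _%:R; lia.
Qed.

End NatIndexedSums.

Section Bidiagonal.
Variables (R : nzRingType) (n : nat).

(* The hypothesis on [f] lets the nonexistent row [n] below the last one read
   as zero, so the last row needs no special treatment. *)
Lemma bidiag_mulmx (f : nat -> nat -> R) : (forall j : 'I_n, f n j = 0) ->
  bidiag_mx R n *m (\matrix_(i, j) f i j) =
    \matrix_(i < n, j < n) (f i j - f i.+1 j).
Proof.
move=> f_n0; apply/matrixP => i j; rewrite !mxE.
under eq_bigr do rewrite !mxE mulrBl.
rewrite sumrB !(sum_ord_nat_delta _ _ _ (f^~ j)) ltn_ord mul1r.
case: ltnP => [_|i1n]; first by rewrite mul1r.
suff -> : i.+1 = n by rewrite mul0r f_n0.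
by apply/eqP; rewrite eqn_leq i1n ltn_ord.
Qed.

Lemma bidiag_mulmx_Vmx : bidiag_mx R n *m Vmx R n = 1%:M.
Proof.
rewrite /Vmx (@bidiag_mulmx (fun k i => (k <= i)%N%:R)) => [|j]; last first.
  by rewrite leqNgt ltn_ord.
apply/matrixP => i j; rewrite !mxE.
case: (eqVneq i j) => [->|ij]; first by rewrite leqnn ltnn subr0.
by rewrite leq_eqVlt (negbTE ij : (i == j :> nat) = false) subrr.
Qed.

Lemma row_bidiag_neq0 (i : 'I_n) : row i (bidiag_mx R n) != 0.
Proof.
apply/eqP => /rowP/(_ i); rewrite !mxE eqxx (gtn_eqF (ltnSn i)) subr0.
exact/eqP/oner_neq0.
Qed.

End Bidiagonal.

Section Laplacian.
Variables (R : nzRingType) (n : nat).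

Lemma laplacian_relabel (s : 'S_n) (E F : rel 'I_n) :
  (forall u v, E u v = F (s u) (s v)) ->
  (perm_mx s)^T *m laplacian R E *m perm_mx s = laplacian R F.
Proof.
move=> EF; rewrite tr_perm_mx -row_permE -[s in perm_mx s]invgK -col_permE.
apply/matrixP => a b; rewrite !mxE (inj_eq perm_inj) EF !permKV /adj_mx.
rewrite (reindex_inj (@perm_inj _ s^-1)) /=.
by congr (_ *+ _ - _); apply: eq_bigr => j _; rewrite !mxE EF !permKV.
Qed.

Definition ltn_rel : rel 'I_n := fun a b => (a < b)%N.

Lemma laplacian_ltn : laplacian R ltn_rel =
  \matrix_(a, b) ((n - a.+1)%N%:R *+ (a == b :> nat) - (a < b)%N%:R).
Proof.
apply/matrixP => a b; rewrite !mxE.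
by under eq_bigr do rewrite mxE; rewrite sum_ord_gtn.
Qed.

Lemma bidiag_mulmx_laplacian_ltn :
  bidiag_mx R n *m laplacian R ltn_rel =
  diag_mx (\row_i (n - i.+1)%N%:R) *m bidiag_mx R n.
Proof.
rewrite laplacian_ltn (@bidiag_mulmx _ _ (fun a b =>
  (n - a.+1)%N%:R *+ (a == b) - (a < b)%N%:R)) => [|j]; last first.
  by rewrite (gtn_eqF (ltn_ord j)) ltnNge (ltnW (ltn_ord j)) mulr0n subrr.
rewrite mul_diag_mx; apply/matrixP => i j; rewrite !mxE.
have [ij|ji|<-] := ltngtP i j; last first.
- by rewrite (gtn_eqF (ltnSn i)) ltnNge leqnSn /= mulr1n mulr0n !subr0 mulr1.
- rewrite (gtn_eqF (ltnW ji : (j < i.+1)%N)) ltnNge (leqW (ltnW ji)) /=.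
  by rewrite !mulr0n !subrr mulr0.
move: ij; rewrite leq_eqVlt => /orP[/eqP ij|ij].
  rewrite ij eqxx ltnn /= mulr0n mulr1n !subr0 sub0r mulrN1.
  have -> : (n - j = (n - j.+1).+1)%N by have := ltn_ord j; lia.
  by rewrite -natr1 addrC opprD.
by rewrite ij (ltn_eqF ij) /= !mulr0n !subrr mulr0.
Qed.

End Laplacian.

Lemma row_diag_mulmx (R : pzSemiRingType) m n (d : 'rV[R]_m) (A : 'M_(m, n)) i :
  row i (diag_mx d *m A) = d 0 i *: row i A.
Proof. by rewrite row_mul row_diag_mx -scalemxAl -rowE. Qed.

Section CompleteDominance.
Context {n : nat} {E : rel 'I_n}.
Hypothesis domE : complete_dominance E.

Lemma dominance_irr u : ~~ E u u.
Proof. by case: domE => -[]. Qed.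

Lemma dominance_total [u v] : u != v -> E u v || E v u.
Proof.
case: domE => -[_ tourE] _ /tourE.
by case/orP => /andP[-> _]; rewrite ?orbT.
Qed.

Lemma dominance_trans : transitive E.
Proof.
move=> v u w Euv Evw; case: domE => _ acycE.
have nuw : u != w.
  apply/eqP => uw; apply: acycE.
  by exists u, [:: v; u]; rewrite /= Euv uw Evw eqxx.
have /orP[//|Ewu] := dominance_total nuw.
by exfalso; apply: acycE; exists u, [:: v; w; u]; rewrite /= Euv Evw Ewu eqxx.
Qed.

Definition dominators v := [set u | E u v].

Lemma card_dominators_lt v : (#|dominators v| < n)%N.
Proof.
rewrite -[n in (_ < n)%N]card_ord -cardsT proper_card // properT.
apply: contraNneq (dominance_irr v) => domv.
by have := in_setT v; rewrite -domv inE.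
Qed.

Lemma card_dominators_mono [u v] :
  E u v -> (#|dominators u| < #|dominators v|)%N.
Proof.
move=> Euv; apply: proper_card; apply/properP; split.
  by apply/subsetP => w; rewrite !inE => Ewu; apply: dominance_trans Ewu Euv.
by exists u; rewrite !inE ?Euv ?(negbTE (dominance_irr u)).
Qed.

Lemma dominanceE u v : E u v = (#|dominators u| < #|dominators v|)%N.
Proof.
apply/idP/idP => [|lt_uv]; first exact: card_dominators_mono.
have [uv|/dominance_total/orP[//|Evu]] := eqVneq u v.
  by rewrite uv ltnn in lt_uv.
by have := card_dominators_mono Evu; rewrite ltnNge (ltnW lt_uv).
Qed.

Lemma dominance_rank_inj : injective (fun v => Ordinal (card_dominators_lt v)).
Proof.
move=> u v [eq_uv]; apply/eqP; apply: contraTT isT => /dominance_total.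
by rewrite !dominanceE eq_uv ltnn.
Qed.

Lemma dominance_sorted : exists s : 'S_n, forall u v, E u v = (s u < s v)%N.
Proof.
by exists (perm dominance_rank_inj) => u v; rewrite !permE dominanceE.
Qed.

End CompleteDominance.

Theorem proposition3p3 (R : realFieldType) (n : nat) (E : rel 'I_n) :
  complete_dominance E ->
  Vmx R n \in unitmx /\ invmx (Vmx R n) = bidiag_mx R n /\
  exists s : 'S_n,
    forall i : 'I_n,
      row i (invmx (Vmx R n)) != 0 /\
      row i (invmx (Vmx R n)) *m ((perm_mx s)^T *m laplacian R E *m perm_mx s)
        = (n - i.+1)%N%:R *: row i (invmx (Vmx R n)).
Proof.
move=> domE; have [_ V_unit] := mulmx1_unit (bidiag_mulmx_Vmx R n).
have invV : invmx (Vmx R n) = bidiag_mx R n.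
  by rewrite -[RHS](mulmxK V_unit) bidiag_mulmx_Vmx mul1mx.
split=> //; split=> //; rewrite invV.
have [s sortE] := dominance_sorted domE.
exists s => i; split; first exact: row_bidiag_neq0.
rewrite (@laplacian_relabel R n s E (ltn_rel n) sortE) -row_mul.
by rewrite bidiag_mulmx_laplacian_ltn row_diag_mulmx mxE.
Qed.
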